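(* Let $m\ge1$ and let $W_m(t,x)=\sum_{w} t^{\mathrm{da}(w)}x^{\ell(w)}$, the sum running over all finite words $w$ (including the empty word) over the alphabet $\{1,2,\dots,m\}$, where $\ell(w)$ is the length of $w$. Then $$W_m(t,x)=\frac{1+mx}{1-mx^2-m(m-1)tx^2}.$$
   Context: For a word $w=a_1a_2\cdots a_\ell$, the degree of asymmetry is $\mathrm{da}(w)=|\{i: 1\le i\le \ell/2,\ a_i\neq a_{\ell+1-i}\}|$. *)

From mathcomp Require Import all_boot all_order all_algebra.
Set Implicit Arguments. Unset Strict Implicit. Unset Printing Implicit Defensive.
Import GRing.Theory.
Local Open Scope ring_scope.

(* Words of length n over the alphabet {1..m} are represented by n.-tuple 'I_m
   (letter k+1 is represented by k). *)

(* degree of asymmetry: number of positions i (1-based, 1 <= i <= n/2) with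
   a_i <> a_{n+1-i}; 0-based: i with 2(i+1) <= n and w_i <> w_{n-1-i}. *)
Definition da (m n : nat) (w : n.-tuple 'I_m) : nat :=
  #|[set i : 'I_n | (2 * i.+1 <= n)%N && (tnth w i != tnth w (rev_ord i))]|.

(* Coefficient of x^n in W_m(t,x): the polynomial in t
   sum over words w of length n of t^da(w). *)
Definition Wcoef (m n : nat) : {poly int} :=
  \sum_(w : n.-tuple 'I_m) 'X^(da w).

(* Truncation of W_m(t,x) to x-degree <= N, as a polynomial in x whose
   coefficients are polynomials in t (outer variable 'X = x, inner 'X%:P = t). *)
Definition Wtrunc (m N : nat) : {poly {poly int}} :=
  \sum_(n < N.+1) (Wcoef m n)%:P * 'X^n.

Definition Wden (m : nat) : {poly {poly int}} :=
  1 - m%:R * 'X^2 - (m * (m - 1))%:R * ('X)%:P * 'X^2.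
Definition Wnum (m : nat) : {poly {poly int}} := 1 + m%:R * 'X.

(* Removing the first letter a and the last letter b of a word of length n+2
   leaves a word w of length n, this is a bijection onto triples (a, b, w),
   and da (a w b) = [a != b] + da w.  Summing over the m^2 pairs (a, b), of
   which m(m-1) are distinct, the coefficients satisfy
   W_{n+2} = (m + m(m-1) t) W_n, with W_0 = 1 and W_1 = m.  Hence multiplying
   W by 1 - (m + m(m-1) t) x^2 kills every coefficient of degree >= 2. *)

From mathcomp Require Import all_boot all_order all_algebra zify ring.
Local Open Scope ring_scope.
Import GRing.Theory.

Definition asym {T : eqType} (x0 : T) (s : seq T) : nat :=
  (\sum_(i < size s)
     ((2 * i.+1 <= size s) && (nth x0 s i != nth x0 s ((size s).-1 - i))))%N.

Lemma asym_cons_rcons (T : eqType) (x0 a b : T) (s : seq T) :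
  asym x0 (a :: rcons s b) = ((a != b) + asym x0 s)%N.
Proof.
rewrite /asym /= size_rcons big_ord_recl big_ord_recr /=.
rewrite nth_rcons ltnn eqxx /bump /=.
have -> : (2 * (1 + size s).+1 <= (size s).+2)%N = false by lia.
rewrite addn0; congr (_ + _)%N; apply: eq_bigr => i _ /=.
have lt_i := ltn_ord i.
rewrite add1n add0n nth_rcons lt_i.
have -> : (2 * i.+2 <= (size s).+2)%N = (2 * i.+1 <= size s)%N by lia.
have -> : ((size s).+1 - i.+1 = ((size s).-1 - i).+1)%N by lia.
by rewrite /= nth_rcons ifT //; lia.
Qed.

Lemma da_asym m n (w : n.-tuple 'I_m) : da w = asym 0%N (map val w).
Proof.
rewrite /da /asym size_map size_tuple -sum1_card big_mkcond /=.
apply: eq_bigr => i _; rewrite inE.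
have nth_val (j : 'I_n) : nth 0%N (map val w) j = val (tnth w j).
  by rewrite (nth_map (tnth w j)) ?size_tuple // -tnth_nth.
have -> : (n.-1 - i)%N = rev_ord i by rewrite /=; lia.
by rewrite !nth_val; case: (_ && _).
Qed.

Definition enclose_tuple {T : Type} {n : nat} (abw : T * T * n.-tuple T) : n.+2.-tuple T :=
  [tuple of abw.1.1 :: rcons abw.2 abw.1.2].

Lemma enclose_tuple_bij (T : finType) n : bijective (@enclose_tuple T n).
Proof.
apply: inj_card_bij.
  move=> [[a b] w] [[a' b'] w'] /(congr1 val) /= [-> /rcons_inj [ew ->]].
  by rewrite (val_inj ew).
by rewrite !card_prod !card_tuple !expnS mulnA.
Qed.

Lemma da_enclose_tuple m n (a b : 'I_m) (w : n.-tuple 'I_m) :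
  da (enclose_tuple (a, b, w)) = ((a != b) + da w)%N.
Proof. by rewrite !da_asym /= map_rcons asym_cons_rcons. Qed.

Lemma sum_pairs_Xneq m :
  \sum_(a : 'I_m) \sum_(b : 'I_m) 'X^(a != b) = m%:R + (m * (m - 1))%:R * 'X
  :> {poly int}.
Proof.
have row_sum (a : 'I_m) : \sum_(b : 'I_m) 'X^(a != b) = 1 + 'X *+ m.-1 :> {poly int}.
  rewrite (bigD1 a) //= eqxx expr0; congr (_ + _).
  under eq_bigr => b nab do rewrite eq_sym nab expr1.
  by rewrite sumr_const cardC1 card_ord.
under eq_bigr do rewrite row_sum.
by rewrite sumr_const card_ord mulrnDl -mulrnA mulr_natl mulnC subn1.
Qed.

Lemma WcoefSS m n :
  Wcoef m n.+2 = (m%:R + (m * (m - 1))%:R * 'X) * Wcoef m n.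
Proof.
rewrite /Wcoef (reindex (@enclose_tuple 'I_m n)); last first.
  exact/onW_bij/enclose_tuple_bij.
have split_da (p : 'I_m * 'I_m * n.-tuple 'I_m) :
    'X^(da (enclose_tuple p)) = 'X^(p.1.1 != p.1.2) * 'X^(da p.2) :> {poly int}.
  by case: p => [[a b] w]; rewrite da_enclose_tuple exprD.
under eq_bigr do rewrite split_da.
rewrite -(pair_bigA _ (fun ab (w : n.-tuple 'I_m) => 'X^(ab.1 != ab.2) * 'X^(da w))) /=.
rewrite -sum_pairs_Xneq (pair_bigA _ (fun a b : 'I_m => _)) mulr_suml; apply: eq_bigr => ab _.
by rewrite mulr_sumr.
Qed.

Lemma Wcoef_small m n : (n <= 1)%N -> Wcoef m n = (m ^ n)%:R.
Proof.
move=> n_le1; have da0 (w : n.-tuple 'I_m) : da w = 0%N.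
  apply/eqP; rewrite cards_eq0; apply/eqP/setP => i; rewrite !inE.
  by have := ltn_ord i; case: (leqP (2 * i.+1) n) => //; lia.
rewrite /Wcoef; under eq_bigr do rewrite da0 expr0.
by rewrite sumr_const card_tuple card_ord.
Qed.

Lemma coef_Wtrunc m N j : (j <= N)%N -> (Wtrunc m N)`_j = Wcoef m j.
Proof.
move=> le_jN; rewrite /Wtrunc; under eq_bigr do rewrite mul_polyC.
by rewrite -poly_def coef_poly ltnS le_jN.
Qed.

Theorem corollary2p4 (m : nat) (hm : (1 <= m)%N) :
  forall N k : nat, (k <= N)%N ->
    (Wden m * Wtrunc m N)`_k = (Wnum m)`_k.
Proof.
move=> N k le_kN.
pose a : {poly int} := m%:R + (m * (m - 1))%:R * 'X.
have -> : Wden m = 1 - a%:P * 'X^2.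
  by rewrite /Wden /a rmorphD rmorphM /= !rmorph_nat; ring.
rewrite mulrBl mul1r coefB -mulrA coefCM coefXnM /Wnum coefD coef1.
rewrite mulr_natl coefMn coefX.
case: k le_kN => [|[|k]] le_kN /=.
- by rewrite mulr0 subr0 mul0rn addr0 coef_Wtrunc // Wcoef_small.
- by rewrite mulr0 subr0 add0r coef_Wtrunc // Wcoef_small // expn1.
- rewrite !coef_Wtrunc; [|lia|lia].
  by rewrite subn2 /= WcoefSS subrr mul0rn addr0.
Qed.
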